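(* Let $X$ be a compact Hausdorff space, $\mathcal C=C(X)$, $\alpha\colon X\to X$ continuous, $\delta f=f\circ\alpha$, $A$ a transfer operator for $(\mathcal C,\delta)$. Fix $\mu\in M_\delta(\mathcal C)$, $n\in\mathbb N$ and a partition of unity $D$. Let $(m_k)\subset M(\mathcal C)$ be a sequence with $\sum_{g\in D}\mu[g]\ln\frac{m_k[A^ng]}{\mu[g]}\to\tau_n(\mu,D)$, and let $(m_{k_i})$ be a subsequence for which the limits $C_n(\mu,g,D):=\lim_{i\to\infty}m_{k_i}[A^ng]$ exist for all $g\in D$. If $\tau_n(\mu,D)>-\infty$, then \[ \sup_{m\in M(\mathcal C)}\ \sum_{g\in D,\ \mu[g]>0}\mu[g]\,\frac{m[A^ng]}{C_n(\mu,g,D)}=1. \]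
   Context: A transfer operator for $(\mathcal C,\delta)$ is a positive linear operator $A\colon\mathcal C\to\mathcal C$ with $A((\delta f)g)=f\,Ag$ for all $f,g\in\mathcal C$. $M(\mathcal C)$ is the set of positive linear functionals $m$ on $\mathcal C$ with $m[\mathbf 1]=1$ ($\mathbf 1$ the constant $1$); $M_\delta(\mathcal C)$ those also satisfying $\mu[\delta f]=\mu[f]$ for all $f$. A partition of unity is a finite set $D$ of nonnegative elements of $\mathcal C$ summing to $\mathbf 1$. $\tau_n(\mu,D)=\sup_{m\in M(\mathcal C)}\sum_{g\in D}\mu[g]\ln\frac{m[A^ng]}{\mu[g]}$, where summands with $\mu[g]=0$ are set to $0$ and $\ln0=-\infty$. *)

From HB Require Import structures.
From mathcomp Require Import all_boot all_order all_algebra.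
From mathcomp Require Import all_classical all_reals all_analysis.
Set Implicit Arguments. Unset Strict Implicit. Unset Printing Implicit Defensive.
Import Order.TTheory GRing.Theory Num.Theory.
Import numFieldNormedType.Exports.
Local Open Scope ring_scope.

(* C(X) is represented by the continuous functions X -> R; functionals and
   operators are functions on all of X -> R, but every hypothesis is only
   imposed on continuous functions, so only their restriction to C(X) matters. *)

Section Defs.
Context {R : realType} {X : topologicalType}.

Definition cont (f : X -> R) : Prop := continuous f.

Definition pos_lin_functional (m : (X -> R) -> R) : Prop :=
  [/\ (forall f g, cont f -> cont g -> m (f \+ g) = m f + m g),
      (forall (c : R) f, cont f -> m (fun x => c * f x) = c * m f) &
      (forall f, cont f -> (forall x, 0 <= f x) -> 0 <= m f)].

Definition in_M (m : (X -> R) -> R) : Prop :=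
  pos_lin_functional m /\ m (fun _ => 1) = 1.

Definition in_Mdelta (alpha : X -> X) (mu : (X -> R) -> R) : Prop :=
  in_M mu /\ forall f, cont f -> mu (f \o alpha) = mu f.

Definition transfer_operator (alpha : X -> X) (A : (X -> R) -> (X -> R)) : Prop :=
  [/\ (forall f, cont f -> cont (A f)),
      (forall f g, cont f -> cont g -> A (f \+ g) = A f \+ A g),
      (forall (c : R) f, cont f -> A (fun x => c * f x) = (fun x => c * A f x)),
      (forall f, cont f -> (forall x, 0 <= f x) -> forall x, 0 <= A f x) &
      (forall f g, cont f -> cont g ->
         A (fun x => (f \o alpha) x * g x) = (fun x => f x * A g x))].

Definition partition_of_unity (N : nat) (g : 'I_N -> X -> R) : Prop :=
  [/\ injective g,
      (forall i, cont (g i)),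
      (forall i x, 0 <= g i x) &
      (forall x, \sum_(i < N) g i x = 1)].

Local Open Scope ereal_scope.

(* summand mu[g] ln (m[A^n g] / mu[g]), set to 0 when mu[g] = 0, ln 0 = -oo *)
Definition tau_term (a b : R) : \bar R :=
  if a == 0%R then 0
  else if b == 0%R then -oo
  else (a * ln (b / a))%:E.

Definition tau_sum (A : (X -> R) -> (X -> R)) (mu m : (X -> R) -> R) (n : nat)
    (N : nat) (g : 'I_N -> X -> R) : \bar R :=
  \sum_(i < N) tau_term (mu (g i)) (m (iter n A (g i))).

Definition tau (A : (X -> R) -> (X -> R)) (mu : (X -> R) -> R) (n : nat)
    (N : nat) (g : 'I_N -> X -> R) : \bar R :=
  ereal_sup [set tau_sum A mu m n g | m in in_M].

End Defs.

(* The weights [a_i = mu[g_i]] are nonnegative and sum to 1.  Since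
   [tau_n(mu, D) > -oo] while the sums [sum_i m_k[A^n g_i]] stay bounded, every
   [C_i] with [a_i > 0] is positive, and [tau_n(mu, D) = sum_i a_i ln (C_i / a_i)],
   i.e. the limits [C_i] realise the supremum defining [tau_n].  For a state [m],
   the states [(1 - t) m_{k_i} + t m] give in the limit
   [sum_i a_i ln (((1 - t) C_i + t m[A^n g_i]) / a_i) <= sum_i a_i ln (C_i / a_i)],
   and the first-order term in [t -> 0+] is [sum_i a_i m[A^n g_i] / C_i <= 1].
   The value 1 is approached along [m_{k_i}] itself. *)

From HB Require Import structures.
From mathcomp Require Import all_boot all_order all_algebra.
From mathcomp Require Import all_classical all_reals all_analysis.
From mathcomp Require Import ring lra.
Import Order.TTheory GRing.Theory Num.Theory.
Import numFieldNormedType.Exports.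
Local Open Scope classical_set_scope.
Local Open Scope ring_scope.

Section ln_bounds.
Context {R : realType}.
Implicit Types (a b c t x K : R).

Lemma ln_le_subr1 x : 0 < x -> ln x <= x - 1.
Proof.
move=> x_gt0; have := @le_ln1Dx R (x - 1); rewrite addrCA subrr addr0; apply; lra.
Qed.

Lemma ln_ge_subV x : 0 < x -> 1 - x^-1 <= ln x.
Proof.
move=> x_gt0; have := @ln_le_subr1 x^-1; rewrite invr_gt0 lnV ?posrE // => /(_ x_gt0).
lra.
Qed.

(* [ln x >= 1 - 1/x] at [x = y / c] leaves the remainder
   [a t^2 (b - c)^2 ((1 - 2t) c + 2 t b) / (c^2 y)], nonnegative as [t <= 1/2]. *)
Lemma ln_mix_increment_ge a c b t : 0 < a -> 0 < c -> 0 <= b -> 0 < t -> t <= 1/2 ->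
  t * (a * (b / c) - a) - t ^+ 2 * (2 * a * (b - c) ^+ 2 / c ^+ 2)
  <= a * ln (((1 - t) * c + t * b) / a) - a * ln (c / a).
Proof.
move=> a_gt0 c_gt0 b_ge0 t_gt0 t_le.
set d := b - c; have -> : (1 - t) * c + t * b = c + t * d by rewrite /d; ring.
have y_gt0 : 0 < c + t * d by rewrite /d; nra.
rewrite -mulrBr !ln_div ?posrE // opprB addrA subrK -ln_div ?posrE //.
apply: le_trans (ler_wpM2l (ltW a_gt0) (ln_ge_subV _ (divr_gt0 y_gt0 c_gt0))).
rewrite -subr_ge0.
have -> : a * (1 - ((c + t * d) / c)^-1) - (t * (a * (b / c) - a)
    - t ^+ 2 * (2 * a * d ^+ 2 / c ^+ 2))
  = a * t ^+ 2 * d ^+ 2 * (c + 2 * t * d) / (c ^+ 2 * (c + t * d)).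
  by rewrite /d; field; rewrite ?gt_eqF.
apply: divr_ge0; last by rewrite mulr_ge0 ?sqr_ge0 ?ltW.
apply: mulr_ge0; last by rewrite /d; nra.
by rewrite mulr_ge0 ?sqr_ge0 // mulr_ge0 ?sqr_ge0 // ltW.
Qed.

Lemma le_mul_small_le0 x K : 0 <= K ->
  (forall t, 0 < t -> t <= 1/2 -> x <= t * K) -> x <= 0.
Proof.
move=> K_ge0 small; rewrite leNgt; apply/negP => x_gt0.
have Kx_gt0 : 0 < K + x by lra.
have t_gt0 : 0 < x / (2 * (K + x)) by rewrite divr_gt0 ?mulr_gt0.
have t_le : x / (2 * (K + x)) <= 1/2 by rewrite ler_pdivrMr ?mulr_gt0 //; nra.
have := small _ t_gt0 t_le.
by rewrite mulrC mulrA ler_pdivlMr ?mulr_gt0 //; nra.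
Qed.

End ln_bounds.

Section tau_term.
Context {R : realType}.
Implicit Types (a b r : R).

Lemma tau_term_le_sub {a b} : 0 <= a -> 0 <= b -> (tau_term a b <= (b - a)%:E)%E.
Proof.
move=> a_ge0 b_ge0; rewrite /tau_term; have [->|a_neq0] := eqVneq a 0.
  by rewrite lee_fin subr0.
have [_|b_neq0] := eqVneq b 0; first by rewrite leNye.
have a_gt0 : 0 < a by rewrite lt0r a_neq0.
have b_gt0 : 0 < b by rewrite lt0r b_neq0.
rewrite lee_fin.
apply: le_trans (ler_wpM2l a_ge0 (ln_le_subr1 _ (divr_gt0 b_gt0 a_gt0))) _.
by rewrite mulrBr mulr1 mulrCA divff ?mulr1.
Qed.

Lemma tau_term_gt_expR a b r : 0 < a -> 0 <= b -> (r%:E < tau_term a b)%E ->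
  a * expR (r / a) < b.
Proof.
move=> a_gt0 b_ge0; rewrite /tau_term gt_eqF //; have [_|b_neq0] := eqVneq b 0.
  by rewrite ltNge leNye.
have b_gt0 : 0 < b by rewrite lt0r b_neq0.
rewrite lte_fin => r_lt.
have : r / a < ln (b / a) by rewrite ltr_pdivrMr // mulrC.
by rewrite -ltr_expR lnK ?posrE ?divr_gt0 // ltr_pdivlMr // mulrC.
Qed.

End tau_term.

Section log_sum.
Context {R : realType} {N : nat}.
Implicit Types (a c : 'I_N -> R) (b : nat -> 'I_N -> R).

Definition logsum a c : R := \sum_(i < N | 0 < a i) a i * ln (c i / a i).

Lemma sum_tau_termE a c : (forall i, 0 <= a i) -> (forall i, 0 < a i -> 0 < c i) ->
  (\sum_(i < N) tau_term (a i) (c i) = (logsum a c)%:E)%E.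
Proof.
move=> a_ge0 c_gt0; rewrite /logsum -sumEFin [in RHS]big_mkcond; apply: eq_bigr => i _.
rewrite /tau_term; have [a_gt0|a_le0] := ltP 0 (a i).
  by rewrite !gt_eqF ?c_gt0.
have -> : a i = 0 by apply: le_anti; rewrite a_le0 a_ge0.
by rewrite eqxx.
Qed.

Lemma cvg_logsum {a b c} : (forall i, b ^~ i @ \oo --> c i) ->
  (forall i, 0 < a i -> 0 < c i) -> logsum a (b j) @[j --> \oo] --> logsum a c.
Proof.
move=> b_cvg c_gt0; rewrite /logsum.
apply: (@cvg_big _ _ +%R 0 _ add_continuous) => i a_gt0.
apply: cvgMl_tmp; apply: (cvg_comp _ _ (cvgMr_tmp (b_cvg i))).
exact/continuous_ln/divr_gt0/a_gt0/c_gt0.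
Qed.

Lemma cvg_sum_tau_term {a b c} : (forall i, 0 <= a i) ->
  (forall i, b ^~ i @ \oo --> c i) -> (forall i, 0 < a i -> 0 < c i) ->
  ((\sum_(i < N) tau_term (a i) (b j i)) @[j --> \oo] --> (logsum a c)%:E)%E.
Proof.
move=> a_ge0 b_cvg c_gt0.
have b_gt0 : \forall j \near \oo, forall i, 0 < a i -> 0 < b j i.
  apply: filter_forall => i; have [a_gt0|a_le0] := ltP 0 (a i).
    by apply: filterS (cvgr_gt _ (b_cvg i) 0 (c_gt0 i a_gt0)) => j.
  exact: nearW.
apply/fine_cvgP; split; first by near do rewrite sum_tau_termE //.
apply: (cvg_trans _ (cvg_logsum b_cvg c_gt0)); apply: near_eq_cvg.
by near do rewrite /= sum_tau_termE //.
Unshelve. all: by end_near.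
Qed.

Lemma sum_tau_term_lbound_gt0 {a b c r} : (forall i, 0 <= a i) ->
  (forall j i, 0 <= b j i) -> (forall i, b ^~ i @ \oo --> c i) ->
  (\forall j \near \oo, r%:E < \sum_(i < N) tau_term (a i) (b j i))%E ->
  forall i, 0 < a i -> 0 < c i.
Proof.
move=> a_ge0 b_ge0 b_cvg r_lt i0 a_gt0.
pose B := \sum_(i < N) c i + 1.
have b_sum_lt : \forall j \near \oo, \sum_(i < N) b j i < B.
  apply: (cvgr_lt (\sum_(i < N) c i)); last by rewrite ltrDl.
  by apply: (@cvg_big _ _ +%R 0 _ add_continuous) => i _; exact: b_cvg.
apply: (lt_le_trans (mulr_gt0 a_gt0 (expR_gt0 ((r - B) / a i0)))).
apply: (cvgr_to_ge (b_cvg i0)); near=> j; apply/ltW/tau_term_gt_expR => //.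
have sum_lt : \sum_(i < N) b j i < B by near: j.
have : (r%:E < \sum_(i < N) tau_term (a i) (b j i))%E by near: j.
rewrite (bigD1 i0) //= => r_lt_j.
(* Each other summand is at most [b j i - a i], so the [i0]-th one exceeds [r - B]. *)
have rest_le : (\sum_(i < N | i != i0) tau_term (a i) (b j i) <= B%:E)%E.
  apply: le_trans (lee_sum _ (fun i _ => tau_term_le_sub (a_ge0 i) (b_ge0 j i))) _.
  rewrite sumEFin lee_fin; apply: le_trans (ltW sum_lt).
  rewrite [leRHS](bigD1 i0) //= ler_wpDl // ler_sum // => i _.
  by rewrite gerBl.
rewrite EFinB lteBlDr //.
exact: lt_le_trans r_lt_j (leeD2l _ rest_le).
Unshelve. all: by end_near.
Qed.

Lemma logsum_max_ratio_le {a c} {b : 'I_N -> R} :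
  (forall i, 0 < a i -> 0 < c i) -> (forall i, 0 <= b i) ->
  (forall t, 0 < t -> t <= 1/2 ->
     logsum a (fun i => (1 - t) * c i + t * b i) <= logsum a c) ->
  \sum_(i < N | 0 < a i) a i * (b i / c i) <= \sum_(i < N | 0 < a i) a i.
Proof.
move=> c_gt0 b_ge0 c_max; rewrite -subr_le0.
pose K := \sum_(i < N | 0 < a i) 2 * a i * (b i - c i) ^+ 2 / c i ^+ 2.
apply: (@le_mul_small_le0 _ _ K) => [|t t_gt0 t_le].
  apply: sumr_ge0 => i a_gt0.
  by rewrite divr_ge0 ?sqr_ge0 // mulr_ge0 ?sqr_ge0 // mulr_ge0 // ltW.
have incr : \sum_(i < N | 0 < a i)
      (t * (a i * (b i / c i) - a i) - t ^+ 2 * (2 * a i * (b i - c i) ^+ 2 / c i ^+ 2))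
    <= \sum_(i < N | 0 < a i)
      (a i * ln (((1 - t) * c i + t * b i) / a i) - a i * ln (c i / a i)).
  by apply: ler_sum => i a_gt0; apply: ln_mix_increment_ge; rewrite ?c_gt0.
rewrite !sumrB -!mulr_sumr sumrB -/K -/(logsum _ _) -/(logsum _ _) in incr.
have := c_max t t_gt0 t_le; nra.
Qed.

End log_sum.

Section states.
Context {R : realType} {X : topologicalType}.
Implicit Types (m : (X -> R) -> R) (f : X -> R).

Lemma in_M_ge0 {m f} : in_M m -> cont f -> (forall x, 0 <= f x) -> 0 <= m f.
Proof. by case=> -[_ _ m_ge0] _; exact: m_ge0. Qed.

Lemma in_M_convex m1 m2 (t : R) : in_M m1 -> in_M m2 -> 0 <= t <= 1 ->
  in_M (fun f => (1 - t) * m1 f + t * m2 f).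
Proof.
move=> [[m1D m1Z m1_ge0] m1_1] [[m2D m2Z m2_ge0] m2_1] /andP[t_ge0 t_le1].
split; last by rewrite m1_1 m2_1; ring.
split=> [f1 f2 cf1 cf2|c f cf|f cf f_ge0].
- by rewrite m1D // m2D //; ring.
- by rewrite m1Z // m2Z //; ring.
- by rewrite addr_ge0 // mulr_ge0 ?subr_ge0 ?m1_ge0 ?m2_ge0.
Qed.

Lemma cont_sum (I : Type) (s : seq I) (F : I -> X -> R) :
  (forall i, cont (F i)) -> cont (fun x => \sum_(i <- s) F i x).
Proof.
by move=> cF x; apply: (@cvg_big _ _ +%R 0 _ add_continuous) => i _; exact: cF.
Qed.

Lemma pos_lin_functional_sum m (I : Type) (s : seq I) (F : I -> X -> R) :
  pos_lin_functional m -> (forall i, cont (F i)) ->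
  m (fun x => \sum_(i <- s) F i x) = \sum_(i <- s) m (F i).
Proof.
case=> mD mZ _ cF; elim: s => [|i s IHs].
  have -> : (fun x => \sum_(i <- [::]) F i x) = (fun x => 0 * (fun=> 1 : R) x).
    by apply: funext => x; rewrite big_nil mul0r.
  by rewrite mZ ?big_nil ?mul0r //; exact: cst_continuous.
have -> : (fun x => \sum_(j <- i :: s) F j x) = F i \+ (fun x => \sum_(j <- s) F j x).
  by apply: funext => x; rewrite big_cons.
by rewrite mD ?IHs ?big_cons //; exact: cont_sum.
Qed.

Lemma in_M_partition_of_unity {m} {N : nat} {g : 'I_N -> X -> R} :
  in_M m -> partition_of_unity g -> \sum_(i < N) m (g i) = 1.
Proof.
move=> [m_lin m_1] [_ g_cont _ g_sum1].
rewrite -pos_lin_functional_sum // -m_1; congr m.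
by apply: funext => x; exact: g_sum1.
Qed.

Lemma cont_iter_transfer {alpha : X -> X} {A n f} :
  transfer_operator alpha A -> cont f -> cont (iter n A f).
Proof. by case=> A_cont _ _ _ _ cf; elim: n => //= n; exact: A_cont. Qed.

Lemma iter_transfer_ge0 {alpha : X -> X} {A n f} : transfer_operator alpha A ->
  cont f -> (forall x, 0 <= f x) -> forall x, 0 <= iter n A f x.
Proof.
move=> hA cf f_ge0; elim: n => //= n IHn; case: (hA) => _ _ _ A_ge0 _.
by apply: A_ge0 => //; exact: cont_iter_transfer hA cf.
Qed.

End states.

Lemma ltn_homo_cvgy {phi : nat -> nat} : {homo phi : k l / (k < l)%N} ->
  phi @ \oo --> \oo.
Proof.
move=> phi_incr; have id_le k : (k <= phi k)%N.
  by elim: k => // k IHk; exact: leq_ltn_trans IHk (phi_incr _ _ (ltnSn k)).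
apply/cvgnyPge => M; near=> k; apply: leq_trans (id_le k); near: k.
exact: nbhs_infty_ge.
Unshelve. all: by end_near.
Qed.

Section maximizing_sequence.
Context {R : realType} {X : topologicalType} {alpha : X -> X}.
Context {A : (X -> R) -> (X -> R)} {mu : (X -> R) -> R} {n N : nat}.
Context {g : 'I_N -> X -> R} {m : nat -> (X -> R) -> R} {C : 'I_N -> R}.
Hypotheses (hA : transfer_operator alpha A) (mu_M : in_M mu) (hD : partition_of_unity g).
Hypotheses (m_M : forall k, in_M (m k))
  (m_tau : (fun k => tau_sum A mu (m k) n g) @ \oo --> tau A mu n g)
  (m_C : forall i, (fun k => m k (iter n A (g i))) @ \oo --> C i)
  (tau_gtNy : (-oo < tau A mu n g)%E).

Let a i := mu (g i).
Let Ag i := iter n A (g i).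

Let a_ge0 i : 0 <= a i.
Proof. by case: hD => _ g_cont g_ge0 _; exact: in_M_ge0. Qed.

Let in_M_Ag_ge0 {m'} : in_M m' -> forall i, 0 <= m' (Ag i).
Proof.
case: hD => _ g_cont g_ge0 _ m'_M i; apply: in_M_ge0 m'_M _ _.
  exact: cont_iter_transfer hA (g_cont i).
exact: iter_transfer_ge0 hA (g_cont i) (g_ge0 i).
Qed.

Lemma sum_pos_weights : \sum_(i < N | 0 < a i) a i = 1.
Proof.
rewrite -(in_M_partition_of_unity mu_M hD) [RHS](bigID (fun i => 0 < a i)) /=.
rewrite [X in _ = _ + X]big1 ?addr0 // => i; rewrite -leNgt => a_le0.
by apply: le_anti; rewrite a_le0 a_ge0.
Qed.

Lemma limit_gt0 i : 0 < a i -> 0 < C i.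
Proof.
have [r r_lt] : exists r : R, (r%:E < tau A mu n g)%E.
  case: (tau A mu n g) tau_gtNy => [t _| _ |//]; last by exists 0; exact: ltry.
  by exists (t - 1); rewrite lte_fin gtrBl.
apply: (sum_tau_term_lbound_gt0 a_ge0 (fun k => in_M_Ag_ge0 (m_M k)) m_C).
exact: m_tau _ (open_ereal_gt' r_lt).
Qed.

Lemma tau_logsum : tau A mu n g = (logsum a C)%:E.
Proof. exact: cvg_unique _ m_tau (cvg_sum_tau_term a_ge0 m_C limit_gt0). Qed.

Lemma ratio_sum_le1 {m'} : in_M m' ->
  \sum_(i < N | 0 < a i) a i * (m' (Ag i) / C i) <= 1.
Proof.
move=> m'_M; rewrite -sum_pos_weights.
apply: logsum_max_ratio_le limit_gt0 (in_M_Ag_ge0 m'_M) _ => t t_gt0 t_le.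
pose mix k f := (1 - t) * m k f + t * m' f.
have mix_M k : in_M (mix k) by apply: in_M_convex => //; apply/andP; split; lra.
have mix_cvg i : (fun k => mix k (Ag i)) @ \oo --> (1 - t) * C i + t * m' (Ag i).
  by rewrite /mix; apply: cvgD; [exact: cvgMl_tmp (m_C i) | exact: cvg_cst].
have mix_lim_gt0 i : 0 < a i -> 0 < (1 - t) * C i + t * m' (Ag i).
  by move=> /limit_gt0; have := in_M_Ag_ge0 m'_M i; nra.
rewrite -lee_fin -tau_logsum.
apply: cvge_to_le
  (cvg_sum_tau_term (b := fun k i => mix k (Ag i)) a_ge0 mix_cvg mix_lim_gt0) _.
by apply: nearW => k; apply: ereal_sup_ubound; exists (mix k).
Qed.

Lemma cvg_ratio_sum1 :
  (\sum_(i < N | 0 < a i) a i * (m k (Ag i) / C i)) @[k --> \oo] --> (1 : R).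
Proof.
rewrite -sum_pos_weights.
have -> : \sum_(i < N | 0 < a i) a i = \sum_(i < N | 0 < a i) a i * (C i / C i).
  by apply: eq_bigr => i a_gt0; rewrite divff ?mulr1 ?gt_eqF ?limit_gt0.
apply: (@cvg_big _ _ +%R 0 _ add_continuous) => i _.
by apply: cvgMl_tmp; apply: cvgMr_tmp; exact: m_C.
Qed.

End maximizing_sequence.

Theorem lemma1p13 (R : realType) (X : topologicalType)
  (hX : hausdorff_space X) (cX : compact [set: X])
  (alpha : X -> X) (calpha : continuous alpha)
  (A : (X -> R) -> (X -> R)) (hA : transfer_operator alpha A)
  (mu : (X -> R) -> R) (hmu : in_Mdelta alpha mu)
  (n : nat) (N : nat) (g : 'I_N -> X -> R) (hD : partition_of_unity g)
  (m : nat -> (X -> R) -> R) (hm : forall k, in_M (m k))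
  (hmconv : (fun k => tau_sum A mu (m k) n g) @ \oo --> tau A mu n g)
  (phi : nat -> nat) (hphi : {homo phi : a b / (a < b)%N})
  (C : 'I_N -> R)
  (hC : forall i, (fun j => m (phi j) (iter n A (g i))) @ \oo --> C i)
  (htau : (-oo < tau A mu n g)%E) :
  ereal_sup [set ((\sum_(i < N | 0 < mu (g i)) mu (g i) * (m' (iter n A (g i)) / C i))%:E)%E
            | m' in in_M] = 1%:E.
Proof.
have mu_M := hmu.1.
have sub_M k : in_M ((m \o phi) k) := hm (phi k).
have sub_tau : (fun j => tau_sum A mu ((m \o phi) j) n g) @ \oo --> tau A mu n g.
  exact: cvg_comp _ _ (ltn_homo_cvgy hphi) hmconv.
apply/le_anti/andP; split.
  apply: ge_ereal_sup => _ [m' m'_M <-]; rewrite lee_fin.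
  exact: (ratio_sum_le1 hA mu_M hD sub_M sub_tau hC htau m'_M).
pose v k := \sum_(i < N | 0 < mu (g i)) mu (g i) * (m (phi k) (iter n A (g i)) / C i).
apply: (@cvge_to_le _ \oo _ _ (EFin \o v)).
  apply: cvg_EFin; first by apply: nearW.
  exact: cvg_ratio_sum1 hA mu_M hD sub_M sub_tau hC htau.
by apply: nearW => k; apply: ereal_sup_ubound; exists (m (phi k)).
Qed.
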